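(* Let $\mu_Y\in\mathbb{R}$, $\sigma_Y>0$, $n\ge 2$, and let $X_1,\dots,X_n$ be i.i.d. random variables with $X_i\sim LN(\mu_Y,\sigma_Y^2)$. Let $A_n=\frac1n\sum_{i=1}^n X_i$, $H_n=n\big/\sum_{i=1}^n (1/X_i)$ and $K_n=\frac{A_n}{H_n}-1$. Then $$E(K_n)=\frac{n-1}{n}\,k=\frac{n-1}{n}\,C_v^2,$$ where $k=C_v^2=\exp(\sigma_Y^2)-1$.
   Context: $X\sim LN(\mu_Y,\sigma_Y^2)$ means $\ln X\sim N(\mu_Y,\sigma_Y^2)$, i.e. $X$ has density $f(x)=\frac{1}{x\sigma_Y\sqrt{2\pi}}\exp\!\big(-\frac{(\ln x-\mu_Y)^2}{2\sigma_Y^2}\big)$ for $x>0$. For such $X$, $\alpha=E[X]$ is the arithmetic mean, $\beta^2=E[(X-\alpha)^2]$ the variance, $C_v=\beta/\alpha$ the coefficient of variation, $h=1/E[1/X]$ the harmonic mean, and $k=\alpha/h-1$ the relative ratio; one has $k=C_v^2=\exp(\sigma_Y^2)-1$. $A_n$ is the sample arithmetic mean, $H_n$ the sample harmonic mean, and $K_n$ the sample relative ratio. *)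

From Stdlib Require Import Reals Lra List.
Open Scope R_scope.

Definition lnpdf (mu s x : R) : R :=
  / (x * s * sqrt (2 * PI)) * exp (- (ln x - mu) ^ 2 / (2 * s ^ 2)).

Definition improper_int0inf (f : R -> R) (l : R) : Prop :=
  forall eps : R, 0 < eps ->
    exists d M : R, 0 < d /\ d <= M /\
      forall a b : R, 0 < a < d -> M < b ->
        exists pr : Riemann_integrable f a b, Rabs (RiemannInt pr - l) < eps.

(* [ln_expect mu s n F l]: for X_1,...,X_n i.i.d. LN(mu, s^2), the expectation
   E[F (X_1 :: ... :: X_n :: nil)] exists and equals l.  It is the integral of
   F against the product density over (0,+oo)^n, computed as an iterated
   improper integral (first variable outermost). *)
Fixpoint ln_expect (mu s : R) (n : nat) (F : list R -> R) (l : R) : Prop :=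
  match n with
  | O => F nil = l
  | S m =>
      exists g : R -> R,
        (forall x : R, 0 < x -> ln_expect mu s m (fun xs => F (x :: xs)) (g x)) /\
        improper_int0inf (fun x => lnpdf mu s x * g x) l
  end.

Definition sample_A (n : nat) (xs : list R) : R :=
  fold_right Rplus 0 xs / INR n.
Definition sample_H (n : nat) (xs : list R) : R :=
  INR n / fold_right (fun x acc => / x + acc) 0 xs.
Definition sample_K (n : nat) (xs : list R) : R :=
  sample_A n xs / sample_H n xs - 1.

From Stdlib Require Import Reals Lra List Lia.
From Coquelicot Require Import Coquelicot.
Open Scope R_scope.

(* E[K_n] = E[A_n / H_n] - 1 and A_n / H_n = n^-2 (sum_i X_i) (sum_j 1/X_j).  In the expanded
   product the n diagonal terms equal 1 and the n(n-1) others have expectation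
   E[X] E[1/X] = e^(mu + s^2/2) e^(-mu + s^2/2) = e^(s^2), whence E[K_n] = (n-1)/n (e^(s^2) - 1).
   The moments E[X^k] = e^(k mu + k^2 s^2/2) come from the substitution x = e^(mu + k s^2 + s sqrt2 t),
   which reduces them to the Gaussian integral of e^(-t^2) over R; that one is sqrt(pi) because
   (int_0^x e^(-t^2))^2 + int_0^1 e^(-x^2 (1+t^2)) / (1+t^2) dt has zero derivative and value pi/4
   at x = 0, while its second summand vanishes as x -> +oo. *)

(* Coquelicot's generic lemmas at [R]-valued functions, where the normed module is not inferred. *)
Lemma continuous_of_ex_derive (f : R -> R) x : ex_derive f x -> continuous f x.
Proof. apply (ex_derive_continuous (V := R_NormedModule)). Qed.

Lemma ex_RInt_of_continuous (f : R -> R) a b :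
  (forall z, Rmin a b <= z <= Rmax a b -> continuous f z) -> ex_RInt f a b.
Proof. apply (ex_RInt_continuous (V := R_CompleteNormedModule)). Qed.

Lemma RInt_scal_R (f : R -> R) a b l :
  ex_RInt f a b -> RInt (fun x => l * f x) a b = l * RInt f a b.
Proof. apply (RInt_scal (V := R_CompleteNormedModule)). Qed.

Lemma RInt_ext_R (f g : R -> R) a b :
  (forall x, Rmin a b < x < Rmax a b -> f x = g x) -> RInt f a b = RInt g a b.
Proof. apply (RInt_ext (V := R_CompleteNormedModule)). Qed.

Definition gauss (t : R) := exp (- t ^ 2).
Definition gauss_int (x : R) : R := RInt gauss 0 x.
Definition defect_integrand (u t : R) := exp (- (u ^ 2 * (1 + t ^ 2))) / (1 + t ^ 2).
Definition gauss_defect (u : R) : R := RInt (defect_integrand u) 0 1.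

Lemma one_plus_sqr_pos t : 0 < 1 + t ^ 2.
Proof. nra. Qed.

Lemma ex_RInt_gauss a b : ex_RInt gauss a b.
Proof.
  apply ex_RInt_of_continuous => z _; apply continuous_of_ex_derive.
  unfold gauss; auto_derive; auto.
Qed.

Lemma is_derive_gauss_int x : is_derive gauss_int x (gauss x).
Proof.
  apply (is_derive_RInt (V := R_NormedModule)) with (a := 0).
  - apply filter_forall => y; apply (RInt_correct (V := R_CompleteNormedModule)), ex_RInt_gauss.
  - apply continuous_of_ex_derive; unfold gauss; auto_derive; auto.
Qed.

Lemma gauss_int_ge0 x : 0 <= x -> 0 <= gauss_int x.
Proof.
  intros Hx; apply RInt_ge_0; auto using ex_RInt_gauss.
  intros; apply Rlt_le, exp_pos.
Qed.

Lemma gauss_int_scale x : gauss_int x = x * RInt (fun t => gauss (x * t)) 0 1.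
Proof.
  unfold gauss_int.
  transitivity (RInt gauss (x * 0 + 0) (x * 1 + 0)); [f_equal; ring |].
  rewrite <- (RInt_comp_lin (V := R_CompleteNormedModule)) by apply ex_RInt_gauss.
  rewrite <- RInt_scal_R.
  - apply RInt_ext_R => t _; unfold scal; simpl; unfold mult; simpl; now rewrite Rplus_0_r.
  - apply ex_RInt_of_continuous => z _; apply continuous_of_ex_derive.
    unfold gauss; auto_derive; auto.
Qed.

Lemma gauss_int_opp y : gauss_int (- y) = - gauss_int y.
Proof.
  rewrite !gauss_int_scale.
  replace (RInt (fun t => gauss (- y * t)) 0 1) with (RInt (fun t => gauss (y * t)) 0 1).
  - ring.
  - apply RInt_ext_R => t _; unfold gauss; f_equal; ring.
Qed.

Definition defect_integrand_du (u t : R) := -2 * u * exp (- (u ^ 2 * (1 + t ^ 2))).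

Lemma is_derive_defect_integrand u t :
  is_derive (fun z => defect_integrand z t) u (defect_integrand_du u t).
Proof.
  pose proof (one_plus_sqr_pos t).
  unfold defect_integrand, defect_integrand_du; auto_derive; [lra |].
  replace (u * (u * 1) * (1 + t * (t * 1))) with (u ^ 2 * (1 + t ^ 2)) by ring.
  replace (1 + t * (t * 1)) with (1 + t ^ 2) by ring.
  field; lra.
Qed.

Lemma continuity_2d_defect_integrand_du x t :
  continuity_2d_pt (fun u v => Derive (fun z => defect_integrand z v) u) x t.
Proof.
  apply continuity_2d_pt_ext with (f := defect_integrand_du).
  { intros; symmetry; apply is_derive_unique, is_derive_defect_integrand. }
  assert (Hsq : forall g : R -> R -> R,
    (forall x t, continuity_2d_pt g x t) ->
    forall x t, continuity_2d_pt (fun u v => g u v ^ 2) x t).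
  { intros g Hg y s.
    apply continuity_2d_pt_ext with (f := fun u v => g u v * g u v); [intros; simpl; ring |].
    apply continuity_2d_pt_mult; apply Hg. }
  unfold defect_integrand_du.
  apply continuity_2d_pt_mult;
    [apply continuity_2d_pt_mult; [apply continuity_2d_pt_const | apply continuity_2d_pt_id1] |].
  apply continuity_1d_2d_pt_comp with (f := exp);
    [apply derivable_continuous_pt, derivable_pt_exp |].
  apply continuity_2d_pt_opp, continuity_2d_pt_mult.
  - apply (Hsq (fun u _ => u)); intros; apply continuity_2d_pt_id1.
  - apply continuity_2d_pt_plus; [apply continuity_2d_pt_const |].
    apply (Hsq (fun _ v => v)); intros; apply continuity_2d_pt_id2.
Qed.

Lemma ex_RInt_defect_integrand u a b : ex_RInt (defect_integrand u) a b.
Proof.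
  apply ex_RInt_of_continuous => z _; apply continuous_of_ex_derive.
  pose proof (one_plus_sqr_pos z).
  unfold defect_integrand; auto_derive; lra.
Qed.

Lemma is_derive_gauss_defect u : is_derive gauss_defect u (-2 * gauss u * gauss_int u).
Proof.
  replace (-2 * gauss u * gauss_int u)
    with (RInt (fun t => Derive (fun z => defect_integrand z t) u) 0 1).
  - apply (is_derive_RInt_param defect_integrand).
    + apply filter_forall => y t _; eexists; apply is_derive_defect_integrand.
    + intros; apply continuity_2d_defect_integrand_du.
    + apply filter_forall => y; apply ex_RInt_defect_integrand.
  - rewrite gauss_int_scale, <- Rmult_assoc, <- RInt_scal_R.
    + apply RInt_ext_R => t _.
      erewrite is_derive_unique; [| apply is_derive_defect_integrand].
      unfold defect_integrand_du, gauss.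
      replace (- (u ^ 2 * (1 + t ^ 2))) with (- u ^ 2 + - (u * t) ^ 2) by ring.
      rewrite exp_plus; ring.
    + apply ex_RInt_of_continuous => z _; apply continuous_of_ex_derive.
      unfold gauss; auto_derive; auto.
Qed.

Lemma gauss_defect_0 : gauss_defect 0 = PI / 4.
Proof.
  rewrite <- atan_1.
  transitivity (RInt (fun t => / (1 + t ^ 2)) 0 1).
  - apply RInt_ext_R => t _; pose proof (one_plus_sqr_pos t).
    unfold defect_integrand; rewrite pow_i, Rmult_0_l, Ropp_0, exp_0 by lia; field; lra.
  - apply is_RInt_unique.
    replace (atan 1) with (minus (atan 1) (atan 0))
      by (rewrite atan_0; unfold minus, plus, opp; simpl; ring).
    apply (is_RInt_derive (V := R_CompleteNormedModule)).
    + intros; apply is_derive_Reals, derivable_pt_lim_atan.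
    + intros x _; pose proof (one_plus_sqr_pos x).
      apply continuous_of_ex_derive; auto_derive; lra.
Qed.

Lemma gauss_int_sqr_add_defect x : gauss_int x ^ 2 + gauss_defect x = PI / 4.
Proof.
  set (h y := gauss_int y ^ 2 + gauss_defect y).
  assert (Hh : forall y, is_derive h y 0).
  { intros y.
    replace 0 with (INR 2 * gauss y * gauss_int y ^ 1 + -2 * gauss y * gauss_int y)
      by (simpl; ring).
    apply (is_derive_plus (V := R_NormedModule)).
    - apply is_derive_pow, is_derive_gauss_int.
    - apply is_derive_gauss_defect. }
  assert (H0 : is_RInt (fun _ => 0) 0 x (minus (h x) (h 0))).
  { apply (is_RInt_derive (V := R_CompleteNormedModule)); [intros; apply Hh |].
    intros; apply continuous_const. }
  apply (is_RInt_unique (V := R_CompleteNormedModule)) in H0; rewrite RInt_const in H0.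
  unfold minus, plus, opp, scal in H0; simpl in H0; unfold mult in H0; simpl in H0.
  assert (h 0 = PI / 4).
  { unfold h, gauss_int; rewrite RInt_point, gauss_defect_0; unfold zero; simpl; ring. }
  unfold h in *; lra.
Qed.

Lemma gauss_defect_bounds u : 0 <= gauss_defect u <= / (1 + u ^ 2).
Proof.
  assert (Hpt : forall t, 0 <= t -> 0 <= defect_integrand u t <= exp (- u ^ 2)).
  { intros t Ht; pose proof (one_plus_sqr_pos t) as Hpos; unfold defect_integrand.
    pose proof (exp_pos (- (u ^ 2 * (1 + t ^ 2)))) as Hexp.
    assert (exp (- (u ^ 2 * (1 + t ^ 2))) <= exp (- u ^ 2)).
    { destruct (Req_dec (u ^ 2 * t ^ 2) 0) as [E | E];
        [right; f_equal; nra | left; apply exp_increasing; nra]. }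
    split; [apply Rlt_le, Rdiv_lt_0_compat; lra |].
    apply Rle_trans with (exp (- (u ^ 2 * (1 + t ^ 2)))); [| lra].
    apply Rmult_le_reg_r with (1 + t ^ 2); [lra |].
    unfold Rdiv; rewrite Rmult_assoc, Rinv_l by lra; nra. }
  assert (Hint : ex_RInt (fun _ => exp (- u ^ 2)) 0 1) by apply ex_RInt_const.
  unfold gauss_defect; split.
  - apply RInt_ge_0; [lra | apply ex_RInt_defect_integrand |].
    intros t Ht; apply Hpt; lra.
  - apply Rle_trans with (RInt (fun _ => exp (- u ^ 2)) 0 1).
    + apply RInt_le; [lra | apply ex_RInt_defect_integrand | exact Hint |].
      intros t Ht; apply Hpt; lra.
    + rewrite RInt_const; change (scal (1 - 0) (exp (- u ^ 2))) with ((1 - 0) * exp (- u ^ 2)).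
      rewrite Rminus_0_r, Rmult_1_l, exp_Ropp.
      pose proof (exp_ineq1_le (u ^ 2)); pose proof (pow2_ge_0 u).
      apply Rinv_le_contravar; lra.
Qed.

Lemma gauss_int_error x :
  0 <= x -> Rabs (gauss_int x - sqrt PI / 2) <= / (1 + x ^ 2) / (sqrt PI / 2).
Proof.
  intros Hx.
  set (c := sqrt PI / 2).
  assert (Hc : 0 < c) by (apply Rdiv_lt_0_compat; [apply sqrt_lt_R0, PI_RGT_0 | lra]).
  assert (Hc2 : c ^ 2 = PI / 4).
  { unfold c; replace ((sqrt PI / 2) ^ 2) with (sqrt PI * sqrt PI / 4) by field.
    rewrite sqrt_sqrt; [lra | pose proof PI_RGT_0; lra]. }
  pose proof (gauss_int_sqr_add_defect x) as Hsq.
  pose proof (gauss_defect_bounds x) as Hd.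
  pose proof (gauss_int_ge0 x Hx) as HG.
  assert (Hfac : Rabs (gauss_int x - c) * (gauss_int x + c) = gauss_defect x).
  { rewrite <- (Rabs_pos_eq (gauss_int x + c)) by lra; rewrite <- Rabs_mult.
    replace ((gauss_int x - c) * (gauss_int x + c)) with (- gauss_defect x) by nra.
    rewrite Rabs_Ropp, Rabs_pos_eq; lra. }
  apply Rmult_le_reg_r with c; [exact Hc |].
  unfold Rdiv; rewrite Rmult_assoc, Rinv_l, Rmult_1_r by lra.
  pose proof (Rabs_pos (gauss_int x - c)); nra.
Qed.

Lemma gauss_int_cvg eps :
  0 < eps -> exists N, 0 < N /\ forall x, N < x -> Rabs (gauss_int x - sqrt PI / 2) < eps.
Proof.
  intros He.
  set (c := sqrt PI / 2).
  assert (Hc : 0 < c) by (apply Rdiv_lt_0_compat; [apply sqrt_lt_R0, PI_RGT_0 | lra]).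
  assert (Hec : 0 < eps * c) by nra.
  exists (/ (eps * c) + 1); split; [pose proof (Rinv_0_lt_compat _ Hec); lra |].
  intros x Hx; pose proof (Rinv_0_lt_compat _ Hec).
  eapply Rle_lt_trans; [apply gauss_int_error; lra |].
  assert (/ (1 + x ^ 2) < eps * c).
  { rewrite <- (Rinv_inv (eps * c)); apply Rinv_lt_contravar; nra. }
  apply Rmult_lt_reg_r with c; [exact Hc |].
  fold c; unfold Rdiv; rewrite Rmult_assoc, Rinv_l by lra; lra.
Qed.

Lemma RInt_gauss_cvg eps : 0 < eps -> exists N, 0 < N /\
  forall A B, A < - N -> N < B -> Rabs (RInt gauss A B - sqrt PI) < eps.
Proof.
  intros He; destruct (gauss_int_cvg (eps / 2)) as [N [HN HG]]; [lra |].
  exists N; split; [exact HN |]; intros A B HA HB.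
  assert (Hsplit : RInt gauss A B = gauss_int B + gauss_int (- A)).
  { rewrite gauss_int_opp; unfold gauss_int.
    rewrite <- (RInt_Chasles (V := R_CompleteNormedModule) gauss A 0 B) by apply ex_RInt_gauss.
    rewrite <- (opp_RInt_swap (V := R_CompleteNormedModule)) by apply ex_RInt_gauss.
    unfold plus, opp; simpl; ring. }
  pose proof (HG B HB); pose proof (HG (- A) ltac:(lra)).
  rewrite Hsplit.
  replace (gauss_int B + gauss_int (- A) - sqrt PI)
    with ((gauss_int B - sqrt PI / 2) + (gauss_int (- A) - sqrt PI / 2)) by field.
  eapply Rle_lt_trans; [apply Rabs_triang | lra].
Qed.

Definition is_RInt_0inf (f : R -> R) (l : R) : Prop :=
  forall eps : R, 0 < eps ->
    exists d M : R, 0 < d /\ d <= M /\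
      forall a b : R, 0 < a < d -> M < b -> ex_RInt f a b /\ Rabs (RInt f a b - l) < eps.

Definition ln_moment (mu s k : R) := exp (k * mu + k ^ 2 * s ^ 2 / 2).

Section LognormalMoment.
Variables (mu s k : R).
Hypothesis Hs : 0 < s.

Let scale := s * sqrt 2.
Let shift := mu + k * s ^ 2.
Let subst (t : R) := exp (shift + scale * t).

Lemma scale_pos : 0 < scale.
Proof. unfold scale; pose proof (sqrt_lt_R0 2 ltac:(lra)); nra. Qed.

Lemma continuous_lnpdf_moment x :
  0 < x -> continuous (fun y => lnpdf mu s y * exp (k * ln y)) x.
Proof.
  intros Hx; apply continuous_of_ex_derive; unfold lnpdf.
  assert (0 < sqrt (2 * PI)) by (apply sqrt_lt_R0; pose proof PI_RGT_0; lra).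
  auto_derive; repeat split; auto.
  apply Rgt_not_eq; repeat apply Rmult_lt_0_compat; auto.
Qed.

Lemma lnpdf_moment_subst t :
  scale * subst t * (lnpdf mu s (subst t) * exp (k * ln (subst t)))
  = ln_moment mu s k / sqrt PI * gauss t.
Proof.
  unfold lnpdf, subst; rewrite ln_exp.
  rewrite (Rmult_assoc (/ _) (exp _) (exp _)), <- exp_plus.
  pose proof (sqrt_lt_R0 2 ltac:(lra)) as Hr; pose proof (sqrt_sqrt 2 ltac:(lra)) as Hr2.
  replace (- (shift + scale * t - mu) ^ 2 / (2 * s ^ 2) + k * (shift + scale * t))
    with ((k * mu + k ^ 2 * s ^ 2 / 2) + - t ^ 2).
  - rewrite (exp_plus (k * mu + k ^ 2 * s ^ 2 / 2)); unfold ln_moment, gauss.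
    rewrite sqrt_mult by (pose proof PI_RGT_0; lra).
    pose proof (sqrt_lt_R0 PI PI_RGT_0); pose proof (exp_pos (shift + scale * t)).
    unfold scale in *; field; repeat split; lra.
  - unfold shift, scale.
    replace (t ^ 2) with (sqrt 2 * sqrt 2 * t ^ 2 / 2) at 1 by (rewrite Hr2; field).
    field; lra.
Qed.

Lemma RInt_lnpdf_moment a b : 0 < a -> 0 < b ->
  RInt (fun x => lnpdf mu s x * exp (k * ln x)) a b
  = ln_moment mu s k / sqrt PI * RInt gauss ((ln a - shift) / scale) ((ln b - shift) / scale).
Proof.
  intros Ha Hb; pose proof scale_pos.
  assert (Hinv : forall y, 0 < y -> subst ((ln y - shift) / scale) = y).
  { intros y Hy; unfold subst.
    replace (shift + scale * ((ln y - shift) / scale)) with (ln y) by (field; lra).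
    apply exp_ln, Hy. }
  rewrite <- RInt_scal_R by apply ex_RInt_gauss.
  rewrite <- (Hinv a Ha) at 1; rewrite <- (Hinv b Hb) at 1.
  rewrite <- (RInt_comp (V := R_CompleteNormedModule) _ subst (fun t => scale * subst t)).
  - apply RInt_ext_R => t _; apply lnpdf_moment_subst.
  - intros; apply continuous_lnpdf_moment, exp_pos.
  - intros t _; split.
    + unfold subst; auto_derive; [auto | ring].
    + apply continuous_of_ex_derive; unfold subst; auto_derive; auto.
Qed.

Lemma is_RInt_0inf_lnpdf_moment :
  is_RInt_0inf (fun x => lnpdf mu s x * exp (k * ln x)) (ln_moment mu s k).
Proof.
  intros eps He; pose proof scale_pos as Hsc.
  set (c := ln_moment mu s k / sqrt PI).
  assert (Hc : 0 < c).
  { apply Rdiv_lt_0_compat; [apply exp_pos | apply sqrt_lt_R0, PI_RGT_0]. }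
  destruct (RInt_gauss_cvg (eps / c)) as [N [HN HG]]; [apply Rdiv_lt_0_compat; auto |].
  exists (exp (shift - scale * N)), (exp (shift + scale * N)).
  split; [apply exp_pos |]; split; [apply Rlt_le, exp_increasing; nra |].
  intros a b Ha Hb.
  assert (Hab : a < b).
  { assert (exp (shift - scale * N) < exp (shift + scale * N)) by (apply exp_increasing; nra).
    lra. }
  split.
  - apply ex_RInt_of_continuous => z Hz; rewrite Rmin_left in Hz by lra.
    apply continuous_lnpdf_moment; lra.
  - rewrite RInt_lnpdf_moment by lra; fold c.
    assert (HA : (ln a - shift) / scale < - N).
    { apply Rmult_lt_reg_r with scale; [exact Hsc |].
      unfold Rdiv; rewrite Rmult_assoc, Rinv_l by lra.
      assert (ln a < shift - scale * N); [| lra].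
      rewrite <- (ln_exp (shift - scale * N)); apply ln_increasing; lra. }
    assert (HB : N < (ln b - shift) / scale).
    { apply Rmult_lt_reg_r with scale; [exact Hsc |].
      unfold Rdiv; rewrite Rmult_assoc, Rinv_l by lra.
      assert (shift + scale * N < ln b); [| lra].
      rewrite <- (ln_exp (shift + scale * N)); apply ln_increasing; [apply exp_pos | lra]. }
    replace (c * RInt gauss ((ln a - shift) / scale) ((ln b - shift) / scale) - ln_moment mu s k)
      with (c * (RInt gauss ((ln a - shift) / scale) ((ln b - shift) / scale) - sqrt PI))
      by (unfold c; field; apply Rgt_not_eq, sqrt_lt_R0, PI_RGT_0).
    rewrite Rabs_mult, (Rabs_pos_eq c) by lra.
    specialize (HG _ _ HA HB).
    apply Rmult_lt_reg_l with (/ c); [apply Rinv_0_lt_compat; exact Hc |].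
    rewrite <- Rmult_assoc, Rinv_l, Rmult_1_l by lra; rewrite Rmult_comm; exact HG.
Qed.

End LognormalMoment.

Lemma is_RInt_0inf_ext f g l :
  (forall x, 0 < x -> f x = g x) -> is_RInt_0inf f l -> is_RInt_0inf g l.
Proof.
  intros Efg Hf eps He; destruct (Hf eps He) as [d [M [Hd [HdM Hab]]]].
  exists d, M; split; [exact Hd |]; split; [exact HdM |].
  intros a b Ha Hb; destruct (Hab a b Ha Hb) as [Hex Hlt].
  assert (E : forall x, Rmin a b < x < Rmax a b -> f x = g x).
  { intros x Hx; rewrite Rmin_left in Hx by lra; apply Efg; lra. }
  split; [apply (ex_RInt_ext (V := R_NormedModule)) with f; auto |].
  rewrite <- (RInt_ext_R f g a b E); exact Hlt.
Qed.

Lemma is_RInt_0inf_plus f g l1 l2 :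
  is_RInt_0inf f l1 -> is_RInt_0inf g l2 -> is_RInt_0inf (fun x => f x + g x) (l1 + l2).
Proof.
  intros Hf Hg eps He.
  destruct (Hf (eps / 2)) as [d1 [M1 [Hd1 [HdM1 Hab1]]]]; [lra |].
  destruct (Hg (eps / 2)) as [d2 [M2 [Hd2 [HdM2 Hab2]]]]; [lra |].
  pose proof (Rmin_l d1 d2); pose proof (Rmin_r d1 d2).
  pose proof (Rmax_l M1 M2); pose proof (Rmax_r M1 M2).
  exists (Rmin d1 d2), (Rmax M1 M2); split; [apply Rmin_glb_lt; auto |]; split; [lra |].
  intros a b Ha Hb.
  destruct (Hab1 a b ltac:(lra) ltac:(lra)) as [E1 B1].
  destruct (Hab2 a b ltac:(lra) ltac:(lra)) as [E2 B2].
  split; [apply (ex_RInt_plus (V := R_NormedModule)); auto |].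
  replace (RInt (fun x => f x + g x) a b) with (RInt f a b + RInt g a b)
    by (symmetry; exact (RInt_plus (V := R_CompleteNormedModule) f g a b E1 E2)).
  replace (RInt f a b + RInt g a b - (l1 + l2)) with ((RInt f a b - l1) + (RInt g a b - l2)) by ring.
  eapply Rle_lt_trans; [apply Rabs_triang | lra].
Qed.

Lemma is_RInt_0inf_scal f c l :
  is_RInt_0inf f l -> is_RInt_0inf (fun x => c * f x) (c * l).
Proof.
  intros Hf eps He.
  pose proof (Rabs_pos c).
  destruct (Hf (eps / (Rabs c + 1))) as [d [M [Hd [HdM Hab]]]];
    [apply Rdiv_lt_0_compat; lra |].
  exists d, M; split; [exact Hd |]; split; [exact HdM |].
  intros a b Ha Hb; destruct (Hab a b Ha Hb) as [E B].
  split; [apply (ex_RInt_scal (V := R_NormedModule)); auto |].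
  rewrite RInt_scal_R by exact E.
  replace (c * RInt f a b - c * l) with (c * (RInt f a b - l)) by ring.
  rewrite Rabs_mult; pose proof (Rabs_pos (RInt f a b - l)).
  apply Rle_lt_trans with ((Rabs c + 1) * Rabs (RInt f a b - l)); [nra |].
  apply Rmult_lt_reg_l with (/ (Rabs c + 1)); [apply Rinv_0_lt_compat; lra |].
  rewrite <- Rmult_assoc, Rinv_l, Rmult_1_l by lra; rewrite Rmult_comm; exact B.
Qed.

Lemma improper_int0inf_of_is_RInt_0inf f l : is_RInt_0inf f l -> improper_int0inf f l.
Proof.
  intros Hf eps He; destruct (Hf eps He) as [d [M [Hd [HdM Hab]]]].
  exists d, M; split; [exact Hd |]; split; [exact HdM |].
  intros a b Ha Hb; destruct (Hab a b Ha Hb) as [E B].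
  exists (ex_RInt_Reals_0 f a b E); rewrite <- RInt_Reals; exact B.
Qed.

Lemma ln_moment_0 mu s : ln_moment mu s 0 = 1.
Proof. unfold ln_moment; rewrite <- exp_0; f_equal; field. Qed.

Lemma ln_moment_1_mul_opp mu s : ln_moment mu s 1 * ln_moment mu s (-1) = exp (s ^ 2).
Proof. unfold ln_moment; rewrite <- exp_plus; f_equal; field. Qed.

Lemma is_RInt_0inf_lnpdf_affine mu s c0 c1 c2 : 0 < s ->
  is_RInt_0inf (fun x => lnpdf mu s x * (c0 + c1 * x + c2 / x))
    (c0 + c1 * ln_moment mu s 1 + c2 * ln_moment mu s (-1)).
Proof.
  intros Hs.
  pose proof (is_RInt_0inf_scal _ c0 _ (is_RInt_0inf_lnpdf_moment mu s 0 Hs)) as M0.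
  pose proof (is_RInt_0inf_scal _ c1 _ (is_RInt_0inf_lnpdf_moment mu s 1 Hs)) as M1.
  pose proof (is_RInt_0inf_scal _ c2 _ (is_RInt_0inf_lnpdf_moment mu s (-1) Hs)) as M2.
  rewrite ln_moment_0, Rmult_1_r in M0.
  apply is_RInt_0inf_ext with (2 := is_RInt_0inf_plus _ _ _ _ (is_RInt_0inf_plus _ _ _ _ M0 M1) M2).
  intros x Hx; cbv beta.
  rewrite Rmult_0_l, exp_0, Rmult_1_l, exp_ln by exact Hx.
  replace (-1 * ln x) with (- ln x) by ring; rewrite exp_Ropp, exp_ln by exact Hx.
  field; lra.
Qed.

Definition sum_list (xs : list R) := fold_right Rplus 0 xs.
Definition sum_inv_list (xs : list R) := fold_right (fun x acc => / x + acc) 0 xs.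

Lemma sum_inv_list_pos ys : ys <> nil -> List.Forall (fun y => 0 < y) ys -> 0 < sum_inv_list ys.
Proof.
  induction ys as [| y ys IH]; intros Hne Hpos; [easy |].
  inversion_clear Hpos as [| ? ? Hy Hys]; simpl; fold (sum_inv_list ys).
  pose proof (Rinv_0_lt_compat y Hy).
  destruct ys as [| z zs]; [simpl; lra |].
  specialize (IH ltac:(easy) Hys); lra.
Qed.

Section SampleMoments.
Variables (mu s : R).
Hypothesis Hs : 0 < s.

Let alpha := ln_moment mu s 1.
Let beta := ln_moment mu s (-1).

(* [ln_expect] has no linearity lemma, so the affine wrapper [c * _ + d] is threaded
   through the induction. *)
Lemma ln_expect_sum_mul_sum_inv (m : nat) (a b c d : R) (F : list R -> R) :
  (forall ys, length ys = m -> List.Forall (fun y => 0 < y) ys ->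
     F ys = c * ((a + sum_list ys) * (b + sum_inv_list ys)) + d) ->
  ln_expect mu s m F
    (c * ((a + INR m * alpha) * (b + INR m * beta) + INR m * (1 - alpha * beta)) + d).
Proof.
  revert a b F; induction m as [| m IH]; intros a b F HF.
  - simpl; rewrite HF by auto; unfold sum_list, sum_inv_list; simpl; ring.
  - exists (fun x => c * ((a + x + INR m * alpha) * (b + / x + INR m * beta)
                          + INR m * (1 - alpha * beta)) + d); split.
    + intros x Hx; apply IH; intros ys Hl Hp.
      rewrite HF by (simpl; auto).
      unfold sum_list, sum_inv_list; simpl; fold (sum_list ys) (sum_inv_list ys); ring.
    + apply improper_int0inf_of_is_RInt_0inf.
      set (e1 := c * (b + INR m * beta)); set (e2 := c * (a + INR m * alpha)).
      set (e0 := c * ((a + INR m * alpha) * (b + INR m * beta) + 1 + INR m * (1 - alpha * beta)) + d).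
      replace (c * ((a + INR (S m) * alpha) * (b + INR (S m) * beta)
                    + INR (S m) * (1 - alpha * beta)) + d)
        with (e0 + e1 * alpha + e2 * beta) by (unfold e0, e1, e2; rewrite S_INR; ring).
      eapply is_RInt_0inf_ext; [| exact (is_RInt_0inf_lnpdf_affine mu s e0 e1 e2 Hs)].
      intros x Hx; f_equal; unfold e0, e1, e2; field; lra.
Qed.

End SampleMoments.

Theorem proposition1 (mu_Y sigma_Y : R) (n : nat) :
  0 < sigma_Y -> (2 <= n)%nat ->
  ln_expect mu_Y sigma_Y n (sample_K n)
    ((INR n - 1) / INR n * (exp (sigma_Y ^ 2) - 1)).
Proof.
  intros Hs Hn.
  assert (Hn0 : 0 < INR n) by (apply lt_0_INR; lia).
  set (alpha := ln_moment mu_Y sigma_Y 1); set (beta := ln_moment mu_Y sigma_Y (-1)).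
  replace ((INR n - 1) / INR n * (exp (sigma_Y ^ 2) - 1)) with
    (/ (INR n * INR n) * ((0 + INR n * alpha) * (0 + INR n * beta) + INR n * (1 - alpha * beta)) + -1).
  - apply (ln_expect_sum_mul_sum_inv mu_Y sigma_Y Hs); intros ys Hl Hp.
    assert (ys <> nil) by (intros ->; simpl in Hl; lia).
    pose proof (sum_inv_list_pos ys ltac:(assumption) Hp).
    unfold sample_K, sample_A, sample_H; fold (sum_list ys) (sum_inv_list ys).
    field; lra.
  - rewrite <- (ln_moment_1_mul_opp mu_Y sigma_Y); fold alpha beta; field; lra.
Qed.
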